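(* Let $S$ be a stable semigroup. If $S$ is DSC, then $S$ is a group.
   Context: Green's relations on $S$: $s\,\mathcal{R}\,t\iff sS^1=tS^1$, $s\,\mathcal{L}\,t\iff S^1s=S^1t$, $s\,\mathcal{J}\,t\iff S^1sS^1=S^1tS^1$, where $S^1$ is $S$ with an identity adjoined. $S$ is stable if for all $s,x\in S$: $x\,\mathcal{J}\,sx\Rightarrow x\,\mathcal{L}\,sx$ and $x\,\mathcal{J}\,xs\Rightarrow x\,\mathcal{R}\,xs$. A diagonal subsemigroup of $S\times S$ is a subsemigroup containing $\{(s,s)\colon s\in S\}$; a congruence is a symmetric and transitive diagonal subsemigroup; $S$ is DSC if every diagonal subsemigroup of $S\times S$ is a congruence on $S$. *)

From Stdlib Require Import Classical.

Set Implicit Arguments.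

Section Semigroup.
Variable S : Type.
Variable mul : S -> S -> S.

(* S^1 : S with an identity adjoined (None is the adjoined identity). *)
Definition mul1l (a : option S) (s : S) : S :=
  match a with None => s | Some a => mul a s end.
Definition mul1r (s : S) (a : option S) : S :=
  match a with None => s | Some a => mul s a end.

Definition in_right_ideal (s t : S) : Prop := exists a : option S, t = mul1r s a.
Definition in_left_ideal (s t : S) : Prop := exists a : option S, t = mul1l a s.
Definition in_two_ideal (s t : S) : Prop :=
  exists a b : option S, t = mul1r (mul1l a s) b.

Definition greenR (s t : S) : Prop := forall u, in_right_ideal s u <-> in_right_ideal t u.
Definition greenL (s t : S) : Prop := forall u, in_left_ideal s u <-> in_left_ideal t u.
Definition greenJ (s t : S) : Prop := forall u, in_two_ideal s u <-> in_two_ideal t u.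

Definition stable : Prop :=
  forall s x : S,
    (greenJ x (mul s x) -> greenL x (mul s x)) /\
    (greenJ x (mul x s) -> greenR x (mul x s)).

Definition diagonal_subsemigroup (D : S -> S -> Prop) : Prop :=
  (forall s, D s s) /\
  (forall a b c d, D a b -> D c d -> D (mul a c) (mul b d)).

Definition is_congruence (D : S -> S -> Prop) : Prop :=
  diagonal_subsemigroup D /\
  (forall a b, D a b -> D b a) /\
  (forall a b c, D a b -> D b c -> D a c).

Definition DSC : Prop :=
  forall D : S -> S -> Prop, diagonal_subsemigroup D -> is_congruence D.

Definition is_group : Prop :=
  exists e : S,
    (forall x, mul e x = x /\ mul x e = x) /\
    (forall x, exists y, mul x y = e /\ mul y x = e).

End Semigroup.

(* DSC forces simplicity: for the ideal I = S^1 a S^1, the relation "x = z or x in I" is a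
   diagonal subsemigroup, and its symmetry puts every y into I. So all elements are J-related,
   and stability upgrades this to x R xc and x L cx. Then "y in aS^1 implies x in aS^1" is a
   diagonal subsemigroup as well, and its symmetry gives aS^1 = S; dually S^1 a = S. A
   semigroup with aS = Sa = S for every a is a group. *)

Section Ideals.
Variable S : Type.
Variable mul : S -> S -> S.
Hypothesis mul_assoc : forall x y z : S, mul x (mul y z) = mul (mul x y) z.

Lemma in_right_ideal_refl a : in_right_ideal mul a a.
Proof. exists None; reflexivity. Qed.

Lemma in_right_ideal_mulr a c : in_right_ideal mul a (mul a c).
Proof. exists (Some c); reflexivity. Qed.

Lemma in_right_ideal_trans a b c :
  in_right_ideal mul a b -> in_right_ideal mul b c -> in_right_ideal mul a c.
Proof.
  intros [o1 H1] [o2 H2]; subst.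
  destruct o1 as [u|], o2 as [v|]; simpl.
  - exists (Some (mul u v)); simpl; now rewrite mul_assoc.
  - exists (Some u); reflexivity.
  - exists (Some v); reflexivity.
  - exists None; reflexivity.
Qed.

Lemma in_two_ideal_refl a : in_two_ideal mul a a.
Proof. exists None, None; reflexivity. Qed.

Lemma in_two_ideal_mulr a z c : in_two_ideal mul a z -> in_two_ideal mul a (mul z c).
Proof.
  intros [p [q H]]; subst.
  destruct q as [v|]; simpl.
  - exists p, (Some (mul v c)); simpl; now rewrite mul_assoc.
  - exists p, (Some c); reflexivity.
Qed.

Lemma in_two_ideal_mull a z c : in_two_ideal mul a z -> in_two_ideal mul a (mul c z).
Proof.
  intros [p [q H]]; subst.
  destruct p as [u|], q as [v|]; simpl.
  - exists (Some (mul c u)), (Some v); simpl; now rewrite !mul_assoc.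
  - exists (Some (mul c u)), None; simpl; now rewrite !mul_assoc.
  - exists (Some c), (Some v); simpl; now rewrite mul_assoc.
  - exists (Some c), None; reflexivity.
Qed.

End Ideals.

Section DSC.
Variable S : Type.
Variable mul : S -> S -> S.
Hypothesis mul_assoc : forall x y z : S, mul x (mul y z) = mul (mul x y) z.
Hypothesis S_DSC : DSC mul.

Lemma DSC_sym {D : S -> S -> Prop} {a b : S} :
  diagonal_subsemigroup mul D -> D a b -> D b a.
Proof. intros HD; apply (S_DSC D HD). Qed.

Lemma DSC_in_two_ideal a y : in_two_ideal mul a y.
Proof.
  set (D := fun x z => x = z \/ in_two_ideal mul a x).
  assert (HD : diagonal_subsemigroup mul D).
  { split.
    - intros s; left; reflexivity.
    - intros x y' c d [H1|H1] [H2|H2]; subst.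
      + left; reflexivity.
      + right; apply in_two_ideal_mull; assumption.
      + right; apply in_two_ideal_mulr; assumption.
      + right; apply in_two_ideal_mulr; assumption. }
  assert (Hay : D a y) by (right; apply in_two_ideal_refl).
  destruct (DSC_sym HD Hay) as [<-|Hy]; [apply in_two_ideal_refl | exact Hy].
Qed.

Lemma DSC_greenJ x z : greenJ mul x z.
Proof. intros u; split; intros _; apply DSC_in_two_ideal. Qed.

Lemma DSC_in_right_ideal (greenR_mulr : forall x c, greenR mul x (mul x c)) a b :
  in_right_ideal mul a b.
Proof.
  set (D := fun x y => in_right_ideal mul a y -> in_right_ideal mul a x).
  assert (HD : diagonal_subsemigroup mul D).
  { split.
    - intros s H; exact H.
    - intros x y c d Hxy _ Hayd.
      assert (Hay : in_right_ideal mul a y).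
      { apply in_right_ideal_trans with (mul y d); auto.
        apply (greenR_mulr y d y), in_right_ideal_refl. }
      apply in_right_ideal_trans with x; auto using in_right_ideal_mulr. }
  assert (Hab : D a b) by (intros _; apply in_right_ideal_refl).
  apply (DSC_sym HD Hab), in_right_ideal_refl.
Qed.

End DSC.

Lemma DSC_opp (S : Type) (mul : S -> S -> S) :
  DSC mul -> DSC (fun x y => mul y x).
Proof.
  intros Hd D [Drefl Dmul].
  assert (HD : diagonal_subsemigroup mul D) by (split; auto).
  destruct (Hd D HD) as [_ [Dsym Dtrans]].
  repeat split; auto.
Qed.

Section LeftRightSimple.
Variable S : Type.
Variable mul : S -> S -> S.
Hypothesis mul_assoc : forall x y z : S, mul x (mul y z) = mul (mul x y) z.

Lemma right_simple_solvable (right_simple : forall a b, in_right_ideal mul a b) a b :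
  exists u, b = mul a u.
Proof.
  destruct (right_simple a b) as [[u|] H]; simpl in H.
  - exists u; exact H.
  - subst b. destruct (right_simple (mul a a) a) as [[v|] H]; simpl in H.
    + exists (mul a v). now rewrite mul_assoc.
    + exists a; exact H.
Qed.

(* A right identity e (from a0 = a0 e) and a left identity f (from a0 = f a0) coincide,
   and the right and left inverses of x solving x y = e = z x coincide as well. *)
Lemma group_of_solvable (S_nonempty : inhabited S)
  (solvable_r : forall a b, exists u, b = mul a u)
  (solvable_l : forall a b, exists u, b = mul u a) :
  is_group mul.
Proof.
  destruct S_nonempty as [a0].
  destruct (solvable_r a0 a0) as [e He].
  destruct (solvable_l a0 a0) as [f Hf].
  assert (mul_e : forall x, mul x e = x).
  { intros x; destruct (solvable_l a0 x) as [v ->].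
    rewrite <- mul_assoc, <- He; reflexivity. }
  assert (f_mul : forall x, mul f x = x).
  { intros x; destruct (solvable_r a0 x) as [v ->].
    rewrite mul_assoc, <- Hf; reflexivity. }
  assert (Hef : e = f) by (rewrite <- (f_mul e) at 1; apply mul_e).
  subst f.
  exists e; split; [intros x; split; auto|].
  intros x.
  destruct (solvable_r x e) as [y Hy], (solvable_l x e) as [z Hz].
  assert (Hzy : z = y) by (rewrite <- (mul_e z), Hy, mul_assoc, <- Hz, f_mul; reflexivity).
  subst z; exists y; split; symmetry; assumption.
Qed.

End LeftRightSimple.

Theorem mainTheorem5 (S : Type) (mul : S -> S -> S)
  (mul_assoc : forall x y z : S, mul x (mul y z) = mul (mul x y) z)
  (S_nonempty : inhabited S) :
  stable mul -> DSC mul -> is_group mul.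
Proof.
  intros Hst Hd.
  (* Left ideals and [greenL] of [mul] are, definitionally, right ideals and [greenR] of [opp]. *)
  set (opp := fun x y : S => mul y x).
  assert (opp_assoc : forall x y z, opp x (opp y z) = opp (opp x y) z)
    by (intros; symmetry; apply mul_assoc).
  assert (greenR_mulr : forall x c, greenR mul x (mul x c))
    by (intros x c; apply (proj2 (Hst c x)), DSC_greenJ; assumption).
  assert (greenL_mull : forall x c, greenR opp x (opp x c))
    by (intros x c; apply (proj1 (Hst c x)), DSC_greenJ; assumption).
  apply group_of_solvable; auto.
  - apply right_simple_solvable; auto.
    apply DSC_in_right_ideal; assumption.
  - apply (right_simple_solvable _ opp); auto.
    apply DSC_in_right_ideal; auto using DSC_opp.
Qed.
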